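(* Let $L$ and $M$ be linear partial differential operators in $\mathbb{R}^n$ with coefficients in $\mathbf{F}$ such that $\mathrm{ord}\, L \geq 1$, $\mathrm{ord}\, M = 1$, and $L$ is not right divisible by $M$. Suppose they satisfy two relations $M_1L = L_1M$ and $\widetilde{M}_1L = \widetilde{L}_1M$ with differential operators $M_1, L_1, \widetilde{M}_1, \widetilde{L}_1$, where $\mathrm{Sym}\, L = \mathrm{Sym}\, L_1 = \mathrm{Sym}\, \widetilde{L}_1$. Then $M_1 = \widetilde{M}_1$ and $L_1 = \widetilde{L}_1$.
   Context: $\mathbf{F}$ is a differential field of functions of $x_1,\ldots,x_n$; operators lie in $\mathbf{F}[D_{x_1},\ldots,D_{x_n}]$. $\mathrm{Sym}$ denotes the principal symbol. $L$ is right divisible by $M$ if $L=SM$ for some differential operator $S$. *)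

From HB Require Import structures.
From mathcomp Require Import all_boot all_order all_algebra.
From mathcomp Require Import mpoly.

Set Implicit Arguments. Unset Strict Implicit. Unset Printing Implicit Defensive.
Import Order.TTheory GRing.Theory Num.Theory.
Local Open Scope ring_scope.

Definition is_derivation (F : fieldType) (d : F -> F) : Prop :=
  (forall x y, d (x + y) = d x + d y) /\ (forall x y, d (x * y) = d x * y + x * d y).

Definition commuting_derivations (F : fieldType) (n : nat) (der : 'I_n -> F -> F) : Prop :=
  (forall i, is_derivation (der i)) /\
  (forall i j x, der i (der j x) = der j (der i x)).

(* Linear differential operators  L = sum_alpha a_alpha D^alpha  (coeffs  *)
(* on the left) are represented by their coefficient families, i.e. by    *)
(* the mpoly  sum_alpha a_alpha 'X_[alpha]  in {mpoly F[n]}.  Addition is *)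
(* the mpoly addition; the (noncommutative) composition is [dmul] below.  *)

Section DiffOp.
Variables (F : fieldType) (n : nat) (der : 'I_n -> F -> F).

Definition dpow (g : 'X_{1..n}) (x : F) : F :=
  foldr (fun i y => iter (g i) (der i) y) x (enum 'I_n).

Definition mbin (a g : 'X_{1..n}) : nat := (\prod_(i < n) 'C(a i, g i))%N.

(* composition of operators, via the Leibniz rule
   D^alpha (q D^beta) = sum_(gamma <= alpha) binom(alpha,gamma) (d^gamma q) D^(alpha-gamma+beta) *)
Definition dmul (P Q : {mpoly F[n]}) : {mpoly F[n]} :=
  \sum_(a <- msupp P) \sum_(b <- msupp Q)
    \sum_(g : 'X_{1..n < (mdeg a).+1} | (bmnm g <= a)%MM)
      (P@_a * (mbin a g)%:R * dpow g (Q@_b)) *: 'X_[(a - g + b)%MM].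

(* order of an operator: max |alpha| with a_alpha <> 0 (0 for L = 0) *)
Definition ord (P : {mpoly F[n]}) : nat := (msize P).-1.

Definition Sym (P : {mpoly F[n]}) : {mpoly F[n]} :=
  \sum_(m <- msupp P | mdeg m == ord P) P@_m *: 'X_[m].

Definition right_divisible (L M : {mpoly F[n]}) : Prop :=
  exists S : {mpoly F[n]}, L = dmul S M.

End DiffOp.

From HB Require Import structures.
From mathcomp Require Import all_boot all_order all_algebra.
From mathcomp Require Import mpoly ssrcomplements zify.
Import Order.TTheory GRing.Theory.
Local Open Scope ring_scope.
Set Implicit Arguments. Unset Strict Implicit.

(* Subtracting the two relations gives D L = E M with D := M1 - tM1 and
   E := L1 - tL1, and equality of principal symbols makes ord E < ord L.
   The leading coefficient of a composition is the product of the leading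
   coefficients, so ord (D L) = ord D + ord L whenever D, L <> 0.  If D <> 0,
   then ord D + ord L = ord E + 1 forces D to be a nonzero constant c, and
   L = (c^-1 E) M contradicts non-divisibility; so D = 0, whence E M = 0 and
   E = 0.  Derivatives of coefficients never reach a leading term, which is
   why the derivation axioms and characteristic zero are not needed. *)

Section DiffOpComposition.
Variables (F : fieldType) (n : nat) (der : 'I_n -> F -> F).
Implicit Types (P Q R : {mpoly F[n]}) (a b g m : 'X_{1..n}).

Lemma dpow0 x : dpow der 0%MM x = x.
Proof. by rewrite /dpow; elim: (enum 'I_n) => //= i s ->; rewrite mnm0E. Qed.

Lemma mbin0 a : mbin a 0%MM = 1%N.
Proof. by rewrite /mbin big1 // => i _; rewrite mnm0E bin0. Qed.

(* [leibniz_mono a b c] is the composite D^a (c D^b). *)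
Definition leibniz_mono a b (c : F) : {mpoly F[n]} :=
  \sum_(g : 'X_{1..n < (mdeg a).+1} | (bmnm g <= a)%MM)
    ((mbin a g)%:R * dpow der g c) *: 'X_[(a - g + b)%MM].

Definition leibniz a Q : {mpoly F[n]} := \sum_(b <- msupp Q) leibniz_mono a b Q@_b.

Lemma dmul_leibniz P Q : dmul der P Q = \sum_(a <- msupp P) P@_a *: leibniz a Q.
Proof.
apply: eq_bigr => a _; rewrite scaler_sumr; apply: eq_bigr => b _.
by rewrite scaler_sumr; apply: eq_bigr => g _; rewrite scalerA !mulrA.
Qed.

Lemma dmulwE k P Q : (msize P <= k)%N ->
  dmul der P Q = \sum_(a : 'X_{1..n < k}) P@_a *: leibniz a Q.
Proof.
move=> le_Pk; pose I : subFinType _ := 'X_{1..n < k}.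
rewrite dmul_leibniz (big_mksub I) ?msupp_uniq //=; last first.
  by move=> a /msize_mdeg_lt /leq_trans; apply.
by rewrite big_rmcond //= => a /memN_msupp_eq0 ->; rewrite scale0r.
Qed.

Lemma dmulB P R Q : dmul der (P - R) Q = dmul der P Q - dmul der R Q.
Proof.
pose k := maxn (msize P) (msize R).
have le_PRk : (msize (P - R) <= k)%N.
  by apply: leq_trans (msizeD_le _ _) _; rewrite msizeN.
rewrite (dmulwE Q le_PRk) (dmulwE Q (leq_maxl _ (msize R))).
rewrite (dmulwE Q (leq_maxr (msize P) _)).
by rewrite -sumrB; apply: eq_bigr => a _; rewrite mcoeffB scalerBl.
Qed.

Lemma dmulZ c P Q : dmul der (c *: P) Q = c *: dmul der P Q.
Proof.
rewrite (dmulwE Q (msizeZ_le P c)) (dmulwE Q (leqnn _)) scaler_sumr.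
by apply: eq_bigr => a _; rewrite mcoeffZ scalerA.
Qed.

Lemma leibniz_mono0 b c : leibniz_mono 0%MM b c = c *: 'X_[b].
Proof.
rewrite /leibniz_mono (big_pred1 bm0) /= ?mbin0 ?dpow0 ?mul1r ?subm0 ?add0m // => g /=.
rewrite -(inj_eq val_inj) /=; apply/idP/eqP => [|->]; last exact: lepm_refl.
by move=> /mnm_lepP le_g0; apply/mnmP => i; have := le_g0 i; rewrite mnm0E leqn0 => /eqP.
Qed.

Lemma leibniz0 Q : leibniz 0%MM Q = Q.
Proof. by rewrite {2}(mpolyE Q); apply: eq_bigr => b _; rewrite leibniz_mono0. Qed.

Lemma dmul0l Q : dmul der 0 Q = 0.
Proof. by rewrite dmul_leibniz msupp0 big_nil. Qed.

Lemma dmulC c Q : dmul der c%:MP Q = c *: Q.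
Proof.
rewrite -alg_mpolyC dmulZ dmul_leibniz msupp1 big_seq1 mcoeff1 eqxx.
by rewrite scale1r leibniz0.
Qed.

Lemma lemc_subm_add a g b : ((a - g + b)%MM <= (a + b)%MM)%O.
Proof. by apply: lem_add => //; apply/lem_leo/lem_subr. Qed.

Lemma mcoeff_leibniz_mono_gt a b c m :
  ((a + b)%MM < m)%O -> (leibniz_mono a b c)@_m = 0.
Proof.
move=> lt_m; rewrite raddf_sum big1 // => g _; rewrite /= mcoeffZ mcoeffX.
suff /negPf -> : (a - g + b)%MM != m by rewrite mulr0.
by apply: contraTneq lt_m => <-; rewrite -leNgt lemc_subm_add.
Qed.

Lemma mcoeff_leibniz_mono a b c : (leibniz_mono a b c)@_(a + b) = c.
Proof.
rewrite raddf_sum (bigD1 bm0) /=; last by apply/mnm_lepP => i; rewrite mnm0E.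
rewrite mcoeffZ mcoeffX subm0 eqxx mbin0 dpow0 !mulr1 mul1r big1 ?addr0 //.
move=> g /andP[le_ga nz_g]; rewrite /= mcoeffZ mcoeffX.
suff /negPf -> : (a - g + b)%MM != (a + b)%MM by rewrite mulr0.
apply: contra_neq nz_g => /(congr1 mdeg); rewrite !mdegD => /addIn eq_deg.
apply: val_inj => /=; apply/eqP; rewrite -mdeg_eq0 -(eqn_add2l (mdeg (a - g))).
by rewrite -mdegD submK // eq_deg addn0.
Qed.

Lemma mcoeff_leibniz_gt a Q m : ((a + mlead Q)%MM < m)%O -> (leibniz a Q)@_m = 0.
Proof.
move=> lt_m; rewrite raddf_sum big1_seq // => b /andP[_ bQ].
apply: mcoeff_leibniz_mono_gt; apply: le_lt_trans lt_m.
by rewrite lemc_add2r msupp_le_mlead.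
Qed.

Lemma mcoeff_leibniz_lead a Q : (leibniz a Q)@_(a + mlead Q) = Q@_(mlead Q).
Proof.
have [->|nzQ] := eqVneq Q 0; first by rewrite /leibniz msupp0 big_nil !mcoeff0.
rewrite raddf_sum (bigD1_seq (mlead Q)) ?mlead_supp ?msupp_uniq //=.
rewrite mcoeff_leibniz_mono big_seq_cond big1 ?addr0 // => b /andP[bQ ne_b].
by rewrite mcoeff_leibniz_mono_gt // ltmc_add2r lt_neqAle ne_b msupp_le_mlead.
Qed.

Lemma mcoeff_dmul_lead P Q :
  (dmul der P Q)@_(mlead P + mlead Q) = P@_(mlead P) * Q@_(mlead Q).
Proof.
have [->|nzP] := eqVneq P 0; first by rewrite dmul0l !mcoeff0 mul0r.
rewrite dmul_leibniz raddf_sum (bigD1_seq (mlead P)) ?mlead_supp ?msupp_uniq //=.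
rewrite mcoeffZ mcoeff_leibniz_lead big_seq_cond big1 ?addr0 // => a /andP[aP ne_a].
rewrite mcoeffZ mcoeff_leibniz_gt ?mulr0 //.
by rewrite ltmc_add2l lt_neqAle ne_a msupp_le_mlead.
Qed.

Lemma msize_sum_le (I : eqType) (r : seq I) (Pr : pred I) (G : I -> {mpoly F[n]}) k :
  (forall i, i \in r -> Pr i -> msize (G i) <= k)%N ->
  (msize (\sum_(i <- r | Pr i) G i) <= k)%N.
Proof.
by move=> le_Gk; apply: leq_trans (@msize_sum _ _ _ r G Pr) _; apply/bigmax_leqP_seq.
Qed.

Lemma mdeg_le_ord P m : m \in msupp P -> (mdeg m <= ord P)%N.
Proof. by move=> /msize_mdeg_lt lt_m; rewrite -ltnS (ltn_predK lt_m). Qed.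

Lemma mcoeff_gt_ord P m : (ord P < mdeg m)%N -> P@_m = 0.
Proof.
move=> lt_m; apply/memN_msupp_eq0.
by apply: contraTN lt_m => /mdeg_le_ord; rewrite -leqNgt.
Qed.

Lemma ord_mlead P : ord P = mdeg (mlead P).
Proof.
have [->|nzP] := eqVneq P 0; first by rewrite /ord msize0 mlead0 mdeg0.
by rewrite /ord -mlead_deg.
Qed.

Lemma msize_dmul_le P Q : (msize (dmul der P Q) <= ord P + ord Q + 1)%N.
Proof.
rewrite dmul_leibniz; apply: msize_sum_le => a aP _.
apply: leq_trans (msizeZ_le _ _) _; apply: msize_sum_le => b bQ _.
apply: msize_sum_le => g _ _.
apply: leq_trans (msizeZ_le _ _) _; rewrite msizeX addn1 ltnS mdegD.
by apply: leq_add; [exact: leq_trans (mdegB a g) (mdeg_le_ord aP) | exact: mdeg_le_ord].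
Qed.

Lemma dmul_neq0 P Q : P != 0 -> Q != 0 -> dmul der P Q != 0.
Proof.
move=> nzP nzQ; apply/eqP => /(congr1 (mcoeff (mlead P + mlead Q))).
rewrite mcoeff_dmul_lead mcoeff0 => /eqP.
by rewrite mulf_eq0 !mleadc_eq0 (negPf nzP) (negPf nzQ).
Qed.

Lemma ord_dmul P Q : P != 0 -> Q != 0 -> ord (dmul der P Q) = (ord P + ord Q)%N.
Proof.
move=> nzP nzQ; apply/eqP; rewrite eqn_leq; apply/andP; split.
  by have := msize_dmul_le P Q; rewrite addn1 /ord; case: (msize (dmul der P Q)).
rewrite (ord_mlead P) (ord_mlead Q) -mdegD mdeg_le_ord // mcoeff_msupp mcoeff_dmul_lead.
by rewrite mulf_neq0 ?mleadc_eq0.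
Qed.

Lemma mcoeff_Sym P m : (Sym P)@_m = if mdeg m == ord P then P@_m else 0.
Proof.
rewrite raddf_sum big_mkcond /=.
have [mP|mNP] := boolP (m \in msupp P).
  rewrite (bigD1_seq m) ?msupp_uniq //= mcoeffZ mcoeffX eqxx mulr1.
  rewrite big1 ?addr0 // => x ne_xm.
  by rewrite mcoeffZ mcoeffX (negPf ne_xm) mulr0 if_same.
rewrite (memN_msupp_eq0 mNP) if_same big1_seq // => x /andP[_ xP].
have ne_xm : x != m by apply: contraNneq mNP => <-.
by rewrite mcoeffZ mcoeffX (negPf ne_xm) mulr0 if_same.
Qed.

Lemma mcoeff_Sym_mlead P : (Sym P)@_(mlead P) = P@_(mlead P).
Proof. by rewrite mcoeff_Sym ord_mlead eqxx. Qed.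

Lemma eq_ord_Sym P R : Sym P = Sym R -> ord P = ord R.
Proof.
wlog nzR : P R / R != 0 => [hwlog eqS|eqS].
  have [R0|nzR] := eqVneq R 0; last exact: hwlog.
  have [P0|nzP] := eqVneq P 0; first by rewrite P0 R0.
  exact/esym/hwlog/esym.
have := nzR; rewrite -mleadc_eq0 -mcoeff_Sym_mlead -eqS mcoeff_Sym.
by case: (mdeg (mlead R) =P ord P) => [<- _|]; rewrite ?eqxx // ord_mlead.
Qed.

Lemma ord_subr_lt_Sym P R : (0 < ord P)%N -> Sym P = Sym R -> (ord (P - R) < ord P)%N.
Proof.
move=> ordP eqS; have ordR := eq_ord_Sym eqS.
have [->|nzPR] := eqVneq (P - R) 0; first by rewrite /ord msize0.
rewrite ord_mlead ltnNge; apply: contra nzPR => le_Pm.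
rewrite -mleadc_eq0 mcoeffB subr_eq0; apply/eqP.
move: le_Pm; rewrite leq_eqVlt => /predU1P[eq_deg|lt_deg].
  by have := congr1 (mcoeff (mlead (P - R))) eqS; rewrite !mcoeff_Sym -ordR eq_deg eqxx.
by rewrite !mcoeff_gt_ord // -ordR.
Qed.

Lemma dmul_ord1_cofactors_eq0 D E L M :
  ord M = 1%N -> ~ right_divisible der L M -> (ord E < ord L)%N ->
  dmul der D L = dmul der E M -> D = 0 /\ E = 0.
Proof.
move=> ordM ndivLM ltEL eqDE.
have nzL : L != 0 by apply: contraTneq ltEL => ->; rewrite /ord msize0.
have nzM : M != 0 by apply: contra_eqN ordM => /eqP ->; rewrite /ord msize0.
have [D0|nzD] := eqVneq D 0.
  split=> //; apply/eqP; apply: contraT => nzE.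
  by have := dmul_neq0 nzE nzM; rewrite -eqDE D0 dmul0l eqxx.
have nzE : E != 0.
  by apply: contraNneq (dmul_neq0 nzD nzL) => E0; rewrite eqDE E0 dmul0l.
have ordD : ord D = 0%N.
  by have := ord_dmul nzD nzL; rewrite eqDE ord_dmul // ordM; lia.
have [c nzc DC] : exists2 c, c != 0 & D = c%:MP.
  apply/msize_poly1P; move: ordD nzD; rewrite /ord -msize_poly_eq0.
  by case: (msize D) => [|[]].
case: ndivLM; exists (c^-1 *: E).
by rewrite dmulZ -eqDE DC dmulC scalerA mulVf // scale1r.
Qed.

End DiffOpComposition.

Unset Implicit Arguments. Set Strict Implicit.

Theorem proposition4 (F : fieldType) (n : nat) (der : 'I_n -> F -> F)
  (Hder : commuting_derivations der)
  (Hchar : [pchar F] =i pred0)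
  (L M M1 L1 tM1 tL1 : {mpoly F[n]}) :
  (1 <= ord L)%N ->
  ord M = 1%N ->
  ~ right_divisible der L M ->
  dmul der M1 L = dmul der L1 M ->
  dmul der tM1 L = dmul der tL1 M ->
  Sym L = Sym L1 ->
  Sym L1 = Sym tL1 ->
  M1 = tM1 /\ L1 = tL1.
Proof.
move=> ordL ordM ndivLM eq1 eq2 symL symL1.
have ordL1 : ord L1 = ord L by rewrite (eq_ord_Sym symL).
have ltEL : (ord (L1 - tL1) < ord L)%N.
  by rewrite -ordL1 ord_subr_lt_Sym // ordL1.
have eqDE : dmul der (M1 - tM1) L = dmul der (L1 - tL1) M by rewrite !dmulB eq1 eq2.
have [/eqP D0 /eqP E0] := dmul_ord1_cofactors_eq0 ordM ndivLM ltEL eqDE.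
by split; apply/eqP; rewrite -subr_eq0.
Qed.
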